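(* Let $k,n,k',n'$ be positive integers. If a $(k,n)$ strategy and a $(k',n')$ strategy for the GKS game exist, then a $(kk',nn')$ strategy for the GKS game exists.
   Context: The GKS game with parameter $n$ (a positive integer). A strategy pair $(S,T)$ consists of a function $S$ assigning a bit in $\{0,1\}$ to every sequence $\pi_1\pi_2\ldots\pi_i$ of distinct elements of $[n]=\{1,\dots,n\}$ with $1\le i\le n-1$, and a function $T:\{0,1\}^n\to 2^{[n]}$. For a permutation $\pi=\pi_1\ldots\pi_n$ of $[n]$ and a bit $b$, the final array $A_{\rm final}\in\{0,1\}^n$ is defined by $A_{\rm final}[\pi_i]=S(\pi_1\ldots\pi_i)$ for $1\le i\le n-1$ and $A_{\rm final}[\pi_n]=b$. The pair $(S,T)$ is a $(k,n)$ strategy if for every permutation $\pi$ of $[n]$ and every bit $b$ we have $\pi_n\in T(A_{\rm final})$, and moreover $|T(\sigma)|\le k$ for every $\sigma\in\{0,1\}^n$. *)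

From mathcomp Require Import all_boot.
Set Implicit Arguments. Unset Strict Implicit. Unset Printing Implicit Defensive.

(* [n] is represented by 'I_n.  A sequence pi_1 ... pi_n of [n] (a permutation)
   is written  rcons pre x  with  x = pi_n  and  pre = pi_1 ... pi_{n-1}. *)

(* Final array: A[pi_i] = S(pi_1 ... pi_i) for i <= n-1, A[pi_n] = b. *)
Definition A_final (n : nat) (S : seq 'I_n -> bool) (pre : seq 'I_n) (b : bool)
  : {ffun 'I_n -> bool} :=
  [ffun y => if y \in pre then S (take (index y pre).+1 pre) else b].

(* (S,T) is a (k,n) strategy.  S is given as a total function on sequences,
   only its values on sequences of distinct elements of length 1..n-1 matter. *)
Definition GKS_strategy (k n : nat) (S : seq 'I_n -> bool)
  (T : {ffun 'I_n -> bool} -> {set 'I_n}) : Prop :=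
  (forall (pre : seq 'I_n) (x : 'I_n) (b : bool),
      uniq (rcons pre x) -> size (rcons pre x) = n ->
      x \in T (@A_final n S pre b))
  /\ (forall sigma : {ffun 'I_n -> bool}, #|T sigma| <= k).

Definition has_GKS_strategy (k n : nat) : Prop :=
  exists (S : seq 'I_n -> bool) (T : {ffun 'I_n -> bool} -> {set 'I_n}),
    @GKS_strategy k n S T.

From mathcomp Require Import all_boot.
Set Implicit Arguments. Unset Strict Implicit. Unset Printing Implicit Defensive.

(* Play the product game on the grid [n] x [n'], one row per outer cell: each row is
   an inner (k', n') game, and a row counts as played in the outer (k, n) game at the
   moment its last cell is filled.  A cell that does not complete its row receives the
   inner strategy's bit on the history of its row; the cell completing a row receives
   the bit making the parity of that row equal to the outer strategy's bit on the
   sequence of rows completed so far.  In the final array, the row parities therefore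
   form a final array of the outer game whose last move is the row of the last cell,
   so T confines that row to k candidates; within that row the entries form a final
   array of the inner game, so T' confines the column to k' candidates. *)

Section Prefix.
Variable T : eqType.
Implicit Types (s t u : seq T) (y z : T) (P : pred T).

Definition prefix_to s y := take (index y s).+1 s.

Lemma prefix_to_pivot s1 y s2 : y \notin s1 -> prefix_to (s1 ++ y :: s2) y = rcons s1 y.
Proof.
move=> ys1; rewrite /prefix_to index_pivot // take_cat ltnNge leqnSn /=.
by rewrite subSnn /= take0 cats1.
Qed.

Lemma pivotP s y : y \in s -> exists s1 s2, s = s1 ++ y :: s2 /\ y \notin s1.
Proof.
move=> ys; exists (take (index y s) s), (drop (index y s).+1 s).
by rewrite -drop_index // cat_take_drop in_take // ltnn.
Qed.

Lemma prefix_to_cat t u z : z \in t -> prefix_to (t ++ u) z = prefix_to t z.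
Proof.
move=> /pivotP [t1 [t2 [-> zt1]]].
by rewrite -catA cat_cons !prefix_to_pivot.
Qed.

Lemma prefix_to_prefix_to s y z : y \in s -> z \in prefix_to s y ->
  prefix_to (prefix_to s y) z = prefix_to s z.
Proof.
move=> /pivotP [s1 [s2 [-> ys1]]]; rewrite prefix_to_pivot // => zs.
by rewrite -cat_rcons prefix_to_cat.
Qed.

Lemma count_prefix_to_le P s y : count P (prefix_to s y) <= count P s.
Proof. by rewrite -{2}(cat_take_drop (index y s).+1 s) count_cat leq_addr. Qed.

Lemma count_prefix_to_lt P s y z :
  y \in s -> z \in s -> index y s < index z s -> P z ->
  count P (prefix_to s y) < count P (prefix_to s z).
Proof.
move=> ys zs lt_yz Pz; have zs' : index z s < size s by rewrite index_mem.
rewrite /prefix_to (take_nth z zs') nth_index // -cats1 count_cat /= Pz addn1 ltnS.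
rewrite -(take_takel s lt_yz).
by rewrite -{2}(cat_take_drop (index y s).+1 (take _ s)) count_cat leq_addr.
Qed.

Lemma filter_prefix_to_full P s y :
  count P (prefix_to s y) = count P s -> filter P (prefix_to s y) = filter P s.
Proof.
rewrite -{2 4}(cat_take_drop (index y s).+1 s) count_cat filter_cat -/(prefix_to s y).
move=> /eqP; rewrite -[X in X == _]addn0 eqn_add2l eq_sym -size_filter size_eq0.
by move=> /eqP ->; rewrite cats0.
Qed.

(* Witness: the last element of [s] satisfying [P]. *)
Lemma count_prefix_to_exists P s c : uniq s -> 0 < c -> count P s = c ->
  exists2 y, y \in s & P y && (count P (prefix_to s y) == c).
Proof.
elim/last_ind: s => [|s z IHs] us c_gt0; first by move=> c0; rewrite -c0 in c_gt0.
move: us; rewrite rcons_uniq => /andP [zs us].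
rewrite -cats1 count_cat /= addn0; case Pz: (P z) => /= cnt.
  exists z; first by rewrite mem_cat inE eqxx orbT.
  by rewrite Pz prefix_to_pivot // -cats1 count_cat /= Pz addn0 cnt.
have [y ys /andP [Py cy]] := IHs us c_gt0 (etrans (esym (addn0 _)) cnt).
by exists y; rewrite ?mem_cat ?ys // Py prefix_to_cat.
Qed.

End Prefix.

Lemma prefix_to_map_filter (T U : eqType) (f : T -> U) (P : pred T) (s : seq T) y :
  y \in s -> P y -> {in filter P s &, injective f} ->
  prefix_to (map f (filter P s)) (f y) = map f (filter P (prefix_to s y)).
Proof.
move=> ys Py f_inj; have [s1 [s2 [es ys1]]] := pivotP ys.
have fys1 : f y \notin map f (filter P s1).
  apply/mapP=> [[w]]; rewrite mem_filter => /andP [Pw ws1] /f_inj eq_yw.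
  by move: ys1; rewrite eq_yw ?ws1 // es mem_filter ?Py ?Pw mem_cat ?ws1 ?inE ?eqxx ?orbT.
rewrite es filter_cat /= Py map_cat /= prefix_to_pivot // prefix_to_pivot //.
by rewrite filter_rcons Py map_rcons.
Qed.

Lemma size_uniq_full (T : finType) (s : seq T) :
  uniq s -> (forall z, z \in s) -> size s = #|T|.
Proof. by move=> us sT; rewrite -(card_uniqP us) cardT; apply: eq_cardT. Qed.

Lemma mem_uniq_full (T : finType) (s : seq T) :
  uniq s -> size s = #|T| -> forall z, z \in s.
Proof.
move=> us sT z; have le_s : size (enum T) <= size s by rewrite -cardE sT.
have [_ ->] := uniq_min_size us (fun w _ => mem_enum T w) le_s.
by rewrite mem_enum.
Qed.

Lemma card_bigcup_le (I T : finType) (P : {pred I}) (F : I -> {set T}) :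
  #|\bigcup_(i in P) F i| <= \sum_(i in P) #|F i|.
Proof.
apply: (big_ind2 (fun (A : {set T}) m => #|A| <= m)) => //; first by rewrite cards0.
by move=> A m B m' le_A le_B; apply: leq_trans (leq_card_setU _ _).1 (leq_add le_A le_B).
Qed.

Section Product.
Variables n n' : nat.
Hypothesis n'_gt0 : 0 < n'.
Local Notation cell := 'I_(n * n').

Lemma ltn_row (z : cell) : z %/ n' < n. Proof. by rewrite ltn_divLR. Qed.
Lemma ltn_col (z : cell) : z %% n' < n'. Proof. by rewrite ltn_pmod. Qed.
Lemma ltn_cell (i : 'I_n) (j : 'I_n') : i * n' + j < n * n'.
Proof. by rewrite -ltn_divLR ?divnMDl ?divn_small ?addn0. Qed.

Definition row (z : cell) : 'I_n := Ordinal (ltn_row z).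
Definition col (z : cell) : 'I_n' := Ordinal (ltn_col z).
Definition cell_at (i : 'I_n) (j : 'I_n') : cell := Ordinal (ltn_cell i j).

Lemma row_cell i j : row (cell_at i j) = i.
Proof. by apply: val_inj; rewrite /= divnMDl // divn_small ?addn0. Qed.
Lemma col_cell i j : col (cell_at i j) = j.
Proof. by apply: val_inj; rewrite /= modnMDl modn_small. Qed.
Lemma cell_row_col z : cell_at (row z) (col z) = z.
Proof. by apply: val_inj; rewrite /= -divn_eq. Qed.

Lemma row_col_inj z1 z2 : row z1 = row z2 -> col z1 = col z2 -> z1 = z2.
Proof. by move=> eq_r eq_c; rewrite -(cell_row_col z1) -(cell_row_col z2) eq_r eq_c. Qed.

Definition in_row i : pred cell := fun z => row z == i.
Definition row_seq i (p : seq cell) : seq 'I_n' := map col (filter (in_row i) p).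

Lemma size_row_seq i p : size (row_seq i p) = count (in_row i) p.
Proof. by rewrite size_map size_filter. Qed.

Lemma mem_row_seq i j p : (j \in row_seq i p) = (cell_at i j \in p).
Proof.
apply/mapP/idP => [[z] | ijp].
  by rewrite mem_filter => /andP [/eqP <- zp] ->; rewrite cell_row_col.
by exists (cell_at i j); rewrite ?col_cell // mem_filter /in_row row_cell eqxx.
Qed.

Lemma col_inj_in_row i p : {in filter (in_row i) p &, injective col}.
Proof.
move=> z1 z2; rewrite !mem_filter => /andP [/eqP r1 _] /andP [/eqP r2 _].
by apply: row_col_inj; rewrite r1 r2.
Qed.

Lemma row_seq_uniq i p : uniq p -> uniq (row_seq i p).
Proof. by move=> up; rewrite map_inj_in_uniq ?filter_uniq //; apply: col_inj_in_row. Qed.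

Lemma prefix_to_row_seq p z : z \in p ->
  prefix_to (row_seq (row z) p) (col z) = row_seq (row z) (prefix_to p z).
Proof.
move=> zp; apply: (@prefix_to_map_filter _ _ col (in_row (row z)) p z zp (eqxx _)).
exact: col_inj_in_row.
Qed.

Variables (S : seq 'I_n -> bool) (S' : seq 'I_n' -> bool).
Variables (T : {ffun 'I_n -> bool} -> {set 'I_n}) (T' : {ffun 'I_n' -> bool} -> {set 'I_n'}).

Definition completes (p : seq cell) y := count (in_row (row y)) (prefix_to p y) == n'.
Definition completed_rows (p : seq cell) := map row (filter (completes p) p).

Definition prod_move y (p : seq cell) :=
  let q := row_seq (row y) p in
  if size q == n' then
    S (completed_rows p) (+) \big[addb/false]_(j <- q | j != col y) S' (prefix_to q j)
  else S' q.

Definition prod_S (p : seq cell) := if p is z :: _ then prod_move (last z p) p else false.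

Definition row_parity (sg : {ffun cell -> bool}) : {ffun 'I_n -> bool} :=
  [ffun i => \big[addb/false]_(j < n') sg (cell_at i j)].
Definition row_array (sg : {ffun cell -> bool}) i : {ffun 'I_n' -> bool} :=
  [ffun j => sg (cell_at i j)].
Definition prod_T sg := \bigcup_(i in T (row_parity sg)) cell_at i @: T' (row_array sg i).

Lemma prod_S_prefix_to p y : y \in p -> prod_S (prefix_to p y) = prod_move y (prefix_to p y).
Proof.
move=> /pivotP [p1 [p2 [-> yp1]]]; rewrite prefix_to_pivot //.
by case: p1 {yp1} => [|z p1] //=; rewrite last_rcons.
Qed.

Lemma card_prod_T k k' : (forall sg, #|T sg| <= k) -> (forall sg, #|T' sg| <= k') ->
  forall sg, #|prod_T sg| <= k * k'.
Proof.
move=> le_T le_T' sg; apply: leq_trans (card_bigcup_le _ _) _.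
apply: (@leq_trans (\sum_(i in T (row_parity sg)) k')).
  by apply: leq_sum => i _; apply: leq_trans (leq_imset_card _ _) (le_T' _).
by rewrite sum_nat_const leq_mul2r le_T orbT.
Qed.

Section Play.
Variables (pre : seq cell) (x : cell) (b : bool).
Hypotheses (play_uniq : uniq (rcons pre x)) (play_size : size (rcons pre x) = n * n').
Local Notation sg := (A_final prod_S pre b).

Lemma pre_uniq : uniq pre.
Proof. by move: play_uniq; rewrite rcons_uniq => /andP []. Qed.

Lemma x_notin_pre : x \notin pre.
Proof. by move: play_uniq; rewrite rcons_uniq => /andP []. Qed.

Lemma mem_pre z : z != x -> z \in pre.
Proof.
have := mem_uniq_full play_uniq; rewrite card_ord => /(_ play_size z).
by rewrite mem_rcons inE => /orP [/eqP ->|//]; rewrite eqxx.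
Qed.

Lemma row_seq_play : rcons (row_seq (row x) pre) (col x) = row_seq (row x) (rcons pre x).
Proof. by rewrite /row_seq filter_rcons /in_row eqxx map_rcons. Qed.

Lemma uniq_row_seq_play : uniq (rcons (row_seq (row x) pre) (col x)).
Proof. by rewrite row_seq_play row_seq_uniq. Qed.

Lemma size_row_seq_play : size (rcons (row_seq (row x) pre) (col x)) = n'.
Proof.
rewrite -[RHS]card_ord; apply: size_uniq_full uniq_row_seq_play _ => j.
rewrite row_seq_play mem_row_seq; have [-> | /mem_pre] := eqVneq (cell_at (row x) j) x.
  by rewrite mem_rcons mem_head.
by rewrite mem_rcons inE => ->; rewrite orbT.
Qed.

Lemma count_row_x_lt : count (in_row (row x)) pre < n'.
Proof.
by have := size_row_seq_play; rewrite size_rcons size_row_seq => e; rewrite -[X in _ < X]e.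
Qed.

Lemma count_row_pre i : i != row x -> count (in_row i) pre = n'.
Proof.
move=> ix; rewrite -size_row_seq -[RHS]card_ord.
apply: size_uniq_full (row_seq_uniq _ pre_uniq) _ => j; rewrite mem_row_seq mem_pre //.
by apply: contra_neq ix => <-; rewrite row_cell.
Qed.

Lemma count_row_pre_le i : count (in_row i) pre <= n'.
Proof.
by have [-> | /count_row_pre ->] := eqVneq i (row x); rewrite ?(ltnW count_row_x_lt).
Qed.

Lemma completes_row_neq y : completes pre y -> row y != row x.
Proof.
apply: contraL => /eqP ryx; rewrite /completes ryx neq_ltn.
by rewrite (leq_ltn_trans (count_prefix_to_le _ _ _) count_row_x_lt).
Qed.

Lemma completes_first y z : y \in pre -> z \in pre -> completes pre y -> row z = row y ->
  index z pre <= index y pre.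
Proof.
move=> yp zp /eqP cy rzy; rewrite leqNgt; apply/negP => lt_yz.
have := count_prefix_to_lt (P := in_row (row y)) yp zp lt_yz (introT eqP rzy).
by rewrite cy ltnNge (leq_trans (count_prefix_to_le _ _ _) (count_row_pre_le _)).
Qed.

Lemma completes_inj : {in filter (completes pre) pre &, injective row}.
Proof.
move=> y z; rewrite !mem_filter => /andP [cy yp] /andP [cz zp] ryz.
have eq_index : index y pre = index z pre by apply/eqP; rewrite eqn_leq !completes_first.
exact: index_inj yp zp eq_index.
Qed.

Lemma exists_completes i : i != row x ->
  exists2 y, y \in pre & completes pre y && (row y == i).
Proof.
move=> ix.
have [y yp /andP [ryi cy]] := count_prefix_to_exists pre_uniq n'_gt0 (count_row_pre ix).
by exists y; rewrite // /completes (eqP ryi) cy eqxx.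
Qed.

Lemma sg_pre z : z \in pre -> sg z = prod_move z (prefix_to pre z).
Proof. by move=> zp; rewrite ffunE zp -/(prefix_to pre z) prod_S_prefix_to. Qed.

Lemma sg_incomplete z : z \in pre -> ~~ completes pre z ->
  sg z = S' (prefix_to (row_seq (row z) pre) (col z)).
Proof.
move=> zp /negbTE nzc; rewrite sg_pre // /prod_move /= size_row_seq.
by rewrite [_ == n']nzc prefix_to_row_seq.
Qed.

Lemma row_array_play : row_array sg (row x) = A_final S' (row_seq (row x) pre) b.
Proof.
apply/ffunP => j; rewrite [LHS]ffunE [RHS]ffunE mem_row_seq.
have [ex | zx] := eqVneq (cell_at (row x) j) x.
  by rewrite ex ffunE (negbTE x_notin_pre).
have zp := mem_pre zx; rewrite zp sg_incomplete ?row_cell ?col_cell //.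
by apply: contraL (@completes_row_neq _) _; rewrite row_cell.
Qed.

Lemma row_x_notin_completed : row x \notin completed_rows pre.
Proof.
apply/mapP => [[z]]; rewrite mem_filter => /andP [/completes_row_neq zx _] xz.
by rewrite xz eqxx in zx.
Qed.

Lemma mem_completed_rows i : i != row x -> i \in completed_rows pre.
Proof. by move=> /exists_completes [y yp /andP [cy /eqP <-]]; rewrite map_f // mem_filter cy. Qed.

Lemma uniq_completed_play : uniq (rcons (completed_rows pre) (row x)).
Proof.
rewrite rcons_uniq row_x_notin_completed map_inj_in_uniq ?filter_uniq ?pre_uniq //.
exact: completes_inj.
Qed.

Lemma size_completed_play : size (rcons (completed_rows pre) (row x)) = n.
Proof.
rewrite -[RHS]card_ord; apply: size_uniq_full uniq_completed_play _ => i.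
by rewrite mem_rcons inE; have [// | /mem_completed_rows ->] := eqVneq i (row x); rewrite orbT.
Qed.

Lemma prefix_to_completed_rows y : y \in pre -> completes pre y ->
  prefix_to (completed_rows pre) (row y) = completed_rows (prefix_to pre y).
Proof.
move=> yp cy; rewrite /completed_rows prefix_to_map_filter //; last exact: completes_inj.
congr (map row _); apply: eq_in_filter => z zy.
by rewrite /completes prefix_to_prefix_to.
Qed.

Lemma row_seq_completes y : y \in pre -> completes pre y ->
  row_seq (row y) (prefix_to pre y) = row_seq (row y) pre.
Proof.
move=> yp cy; rewrite /row_seq filter_prefix_to_full // (eqP cy) count_row_pre //.
exact: completes_row_neq.
Qed.

Lemma sg_completes y : y \in pre -> completes pre y ->
  let Q := row_seq (row y) pre in
  sg y = S (completed_rows (prefix_to pre y)) (+)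
         \big[addb/false]_(j <- Q | j != col y) S' (prefix_to Q j).
Proof.
move=> yp cy; rewrite sg_pre // /prod_move /= row_seq_completes // size_row_seq.
by rewrite count_row_pre ?eqxx // completes_row_neq.
Qed.

Lemma sg_completed_row y j : y \in pre -> completes pre y -> j != col y ->
  sg (cell_at (row y) j) = S' (prefix_to (row_seq (row y) pre) j).
Proof.
move=> yp cy jy; have zx : cell_at (row y) j != x.
  by apply: contra_neq (completes_row_neq cy) => <-; rewrite row_cell.
rewrite sg_incomplete ?mem_pre ?row_cell ?col_cell //; apply: contra jy => cz.
have <- : cell_at (row y) j = y.
  by apply: completes_inj; rewrite ?mem_filter ?cz ?cy ?yp ?mem_pre ?row_cell.
by rewrite col_cell.
Qed.

Lemma row_parity_completes y : y \in pre -> completes pre y ->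
  row_parity sg (row y) = S (completed_rows (prefix_to pre y)).
Proof.
move=> yp cy; set Q := row_seq (row y) pre.
have uQ : uniq Q := row_seq_uniq _ pre_uniq.
have sizeQ : size Q = #|'I_n'|.
  by rewrite card_ord size_row_seq count_row_pre ?completes_row_neq.
have permQ : perm_eq (index_enum 'I_n') Q.
  by apply: uniq_perm; rewrite ?index_enum_uniq // => j; rewrite mem_index_enum mem_uniq_full.
rewrite ffunE (perm_big _ permQ) (bigD1_seq (col y)) ?mem_uniq_full //= cell_row_col.
rewrite sg_completes // -/Q; set others := \big[addb/false]_(j <- Q | _) _.
suff -> : \big[addb/false]_(j <- Q | j != col y) sg (cell_at (row y) j) = others.
  by rewrite addbK.
by apply: eq_bigr => j jy; rewrite sg_completed_row.
Qed.

Lemma row_parity_play : A_final S (completed_rows pre) (row_parity sg (row x)) = row_parity sg.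
Proof.
apply/ffunP => i; rewrite [LHS]ffunE.
have [-> | /exists_completes [y yp /andP [cy /eqP <-]]] := eqVneq i (row x).
  by rewrite (negbTE row_x_notin_completed).
rewrite mem_completed_rows ?completes_row_neq // -/(prefix_to _ _).
by rewrite prefix_to_completed_rows // row_parity_completes.
Qed.

End Play.

Lemma prod_strategy k k' : @GKS_strategy k n S T -> @GKS_strategy k' n' S' T' ->
  @GKS_strategy (k * k') (n * n') prod_S prod_T.
Proof.
move=> [win le_T] [win' le_T']; split; last exact: card_prod_T.
move=> pre x b play_uniq play_size; apply/bigcupP; exists (row x).
  rewrite -(row_parity_play b play_uniq play_size).
  exact: win (uniq_completed_play play_uniq play_size) (size_completed_play play_uniq play_size).
apply/imsetP; exists (col x); last by rewrite cell_row_col.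
rewrite (row_array_play b play_uniq play_size).
exact: win' (uniq_row_seq_play play_uniq) (size_row_seq_play play_uniq play_size).
Qed.

End Product.

Theorem lemma1 (k n k' n' : nat) :
  0 < k -> 0 < n -> 0 < k' -> 0 < n' ->
  has_GKS_strategy k n -> has_GKS_strategy k' n' ->
  has_GKS_strategy (k * k') (n * n').
Proof.
move=> _ _ _ n'_gt0 [S [T strat]] [S' [T' strat']].
by exists (prod_S n'_gt0 S S'), (prod_T n'_gt0 T T'); apply: prod_strategy.
Qed.
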